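(* Let $U$ be an undirected graph with $n$ vertices, diameter $d$ and maximum degree $\Delta$ satisfying $\Delta^d-1<n(\Delta-1)$. Then for any vertex $v$ and any subset $A$ of vertices with $|A|\le\Delta$, there exists a vertex $u\neq v$ with $\operatorname{dist}(u,A)>d-2$.
   Context: $\operatorname{dist}$ denotes graph distance in $U$, and for a vertex $u$ and vertex set $A$, $\operatorname{dist}(u,A)=\min\{\operatorname{dist}(u,a):a\in A\}$. *)

From mathcomp Require Import all_boot all_order all_algebra.
Set Implicit Arguments. Unset Strict Implicit. Unset Printing Implicit Defensive.

(* A finite simple undirected graph on vertex type T is given by an edge
   relation e : rel T that is symmetric and irreflexive. *)

Definition walkb (T : finType) (e : rel T) (k : nat) (u w : T) : bool :=
  [exists p : k.-tuple T, path e u p && (last u p == w)].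

(* Shortest paths have length < #|T|, so on a connected graph this is
   the true distance (the value #|T| is only a sentinel for unreachable
   pairs, which do not occur under the connectivity hypothesis). *)
Definition dist (T : finType) (e : rel T) (u w : T) : nat :=
  find (fun k => walkb e k u w) (iota 0 #|T|).

Definition diameter (T : finType) (e : rel T) : nat :=
  \max_(u : T) \max_(w : T) dist e u w.

Definition maxdeg (T : finType) (e : rel T) : nat :=
  \max_(u : T) #|[set w | e u w]|.

(* The vertices within distance d - 2 of some a in A are reached from A by
   walks of length k <= d - 2, so there are at most
   |A| (1 + D + ... + D^(d-2)) <= D + D^2 + ... + D^(d-1) of them.  The
   hypothesis says exactly that 1 + D + ... + D^(d-1) < n, so even after
   also excluding v some vertex is left over. *)

From mathcomp Require Import all_boot all_order all_algebra.
From mathcomp Require Import zify.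
Import Order.TTheory GRing.Theory Num.Theory.

Set Implicit Arguments.
Unset Strict Implicit.
Unset Printing Implicit Defensive.

Lemma leq_card_bigcup (T I : finType) (P : pred I) (F : I -> {set T}) :
  #|\bigcup_(i | P i) F i| <= \sum_(i | P i) #|F i|.
Proof.
elim/big_ind2: _ => [|m A n B leAm leBn|//]; first by rewrite cards0.
by apply: leq_trans (leq_card_setU A B) _; rewrite leq_add.
Qed.

Lemma exists_notin_setU1 (T : finType) (v : T) (B : {set T}) :
  #|B|.+1 < #|T| -> exists u, u != v /\ u \notin B.
Proof.
move=> ltBT; have : 0 < #|~: (v |: B)|.
  by have := cardsC (v |: B); have := cardsU1 v B; lia.
by case/card_gt0P=> u; rewrite !inE negb_or => /andP[]; exists u.
Qed.

Section GeometricBound.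
Variables D d n : nat.
Hypothesis geom_lt : (D%:Z ^+ d - 1 < n%:Z * (D%:Z - 1))%R.

Lemma geom_base_gt1 : 0 < n -> 1 < D.
Proof.
move: geom_lt; case: D => [|[|D']] //= lt_n.
- by case: d lt_n; rewrite ?expr0 ?expr0n /=; lia.
- by rewrite expr1n subrr mulr0 ltxx in lt_n.
Qed.

Lemma geom_sum_lt : 1 < D -> \sum_(k < d) D ^ k < n.
Proof.
move=> gt1D; move: geom_lt.
rewrite subrX1 mulrC ltr_pM2r ?subr_gt0 ?ltz_nat //.
by under eq_bigr do rewrite -natz -natrX; rewrite -natr_sum natz ltz_nat.
Qed.

(* D <= n only matters for d = 0, where the claim degenerates to 1 < n. *)
Lemma geom_ball_lt : 1 < D <= n -> (D * \sum_(k < d.-1) D ^ k).+1 < n.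
Proof.
case/andP=> gt1D leDn; have := geom_sum_lt gt1D.
case: d => [_|d' /=]; first by rewrite big_ord0 muln0; lia.
by rewrite big_ord_recl expn0 big_distrr /= add1n; under eq_bigr do rewrite expnS.
Qed.

End GeometricBound.

Section Walks.
Variables (T : finType) (e : rel T).

(* Defined recursively rather than as [set u | walkb e k u a] so that the
   size bound is a plain induction; for symmetric e it contains that set. *)
Fixpoint walk_ends (k : nat) (a : T) : {set T} :=
  if k is k'.+1 then \bigcup_(w in walk_ends k' a) [set u | e w u] else [set a].

Lemma card_walk_ends k a : #|walk_ends k a| <= maxdeg e ^ k.
Proof.
elim: k => [|k IH] /=; first by rewrite cards1.
apply: leq_trans (leq_card_bigcup _ _) _.
apply: leq_trans (_ : \sum_(w in walk_ends k a) maxdeg e <= _).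
  by apply: leq_sum => w _; exact: (@leq_bigmax _ (fun u => #|[set x | e u x]|) w).
by rewrite sum_nat_const expnS mulnC leq_mul2l IH orbT.
Qed.

Lemma walkb_walk_ends : symmetric e ->
  forall k u a, walkb e k u a -> u \in walk_ends k a.
Proof.
move=> e_sym; elim=> [|k IH] u a /existsP[p].
  by rewrite tuple0 /= => /eqP->; rewrite in_set1.
case/tupleP: p => x p /= /andP[/andP[e_ux path_xp] last_p].
apply/bigcupP; exists x; last by rewrite inE e_sym.
by apply: IH; apply/existsP; exists p; rewrite path_xp.
Qed.

Lemma dist_leq_card u w : dist e u w <= #|T|.
Proof. by rewrite /dist -[leqRHS](size_iota 0) find_size. Qed.

Lemma diameter_leq_card : diameter e <= #|T|.
Proof. by apply/bigmax_leqP=> u _; apply/bigmax_leqP=> w _; apply: dist_leq_card. Qed.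

Lemma maxdeg_leq_card : maxdeg e <= #|T|.
Proof. by apply/bigmax_leqP=> u _; apply: max_card. Qed.

Lemma walkb_dist u w : dist e u w < #|T| -> walkb e (dist e u w) u w.
Proof.
move=> lt_dist; have has_walk : has (fun k => walkb e k u w) (iota 0 #|T|).
  by rewrite has_find size_iota.
by have := nth_find 0 has_walk; rewrite nth_iota.
Qed.

Definition ball (A : {set T}) (m : nat) : {set T} :=
  \bigcup_(a in A) \bigcup_(k < m) walk_ends k a.

Lemma card_ball A m : #|ball A m| <= #|A| * \sum_(k < m) maxdeg e ^ k.
Proof.
apply: leq_trans (leq_card_bigcup _ _) _; rewrite -sum_nat_const.
apply: leq_sum => a _; apply: leq_trans (leq_card_bigcup _ _) _.
by apply: leq_sum => k _; apply: card_walk_ends.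
Qed.

Lemma mem_ball : symmetric e -> forall (A : {set T}) m u a, a \in A ->
  dist e u a < m <= #|T| -> u \in ball A m.
Proof.
move=> e_sym A m u a aA /andP[lt_m le_mT].
apply/bigcupP; exists a => //; apply/bigcupP; exists (Ordinal lt_m) => //.
by apply: walkb_walk_ends => //; apply: walkb_dist; apply: leq_trans le_mT.
Qed.

End Walks.

Theorem mainTheorem14 (T : finType) (e : rel T)
  (e_sym : symmetric e) (e_irr : irreflexive e)
  (e_conn : forall u w : T, connect e u w)
  (hyp : ((maxdeg e)%:Z ^+ (diameter e) - 1 <
          (#|T|)%:Z * ((maxdeg e)%:Z - 1))%R) :
  forall (v : T) (A : {set T}), #|A| <= maxdeg e ->
    exists u : T, u != v /\
      (forall a, a \in A -> ((diameter e)%:Z - 2 < (dist e u a)%:Z)%R).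
Proof.
move=> v A le_A_D.
have gt0T : 0 < #|T| by apply/card_gt0P; exists v.
have gt1D := geom_base_gt1 hyp gt0T.
have lt_ball : #|ball e A (diameter e).-1|.+1 < #|T|.
  apply: leq_ltn_trans (geom_ball_lt hyp _); last by rewrite gt1D maxdeg_leq_card.
  by rewrite ltnS (leq_trans (card_ball _ _ _)) // leq_mul2r le_A_D orbT.
have [u [neq_uv notin_ball]] := exists_notin_setU1 v lt_ball.
exists u; split=> // a aA.
have : ~~ (dist e u a < (diameter e).-1 <= #|T|).
  by apply: contra notin_ball; apply: mem_ball.
have := diameter_leq_card e; lia.
Qed.
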